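(* Let $(X,\mathcal F)$ be a measurable space, $Y=[0,1]$ or $Y=[0,\infty]$, and $\mu\colon\mathcal F\to Y$ a monotone measure. Let $\circ,\star,\Box\colon Y\times Y\to Y$ be non-decreasing operators, let $\circledcirc\colon Y\times Y\to Y$ be a non-decreasing and left-continuous operator, and let $\triangle\colon Y\times Y\to Y$ be an arbitrary operator. Assume that for all $a,b,c,d\in Y$ and all $t\ge 1$, $$a^t\circ b\ge (a\circ b)^t,\qquad (a\,\Box\, b)\circ(c\,\triangle\, d)\ge (a\circ c)\circledcirc(b\circ d).$$ Let $p,q\ge 1$, $r,s>0$, let $A,B\in\mathcal F$ and let $f,g,h\colon X\to Y$ be measurable functions such that the pairs $f|_A, g|_B$ and $f|_A, h|_B$ are each positively dependent with respect to $\mu$ and $\triangle$. Then $$\Big(\Big(\int_A f\circ\mu\Big)\circledcirc\Big(\int_B g\circ\mu\Big)\Big)^r\star\Big(\Big(\int_A f\circ\mu\Big)\circledcirc\Big(\int_B h\circ\mu\Big)\Big)^s\le\Big(\int_{A\cap B}(f\,\Box\, g)^p\circ\mu\Big)^{r/p}\star\Big(\int_{A\cap B}(f\,\Box\, h)^q\circ\mu\Big)^{s/q}.$$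
   Context: A monotone measure is a map $\mu\colon\mathcal F\to Y$ with $\mu(\emptyset)=0$, $\mu(X)>0$ and $\mu(A)\le\mu(B)$ whenever $A\subset B$. An operator $\circ\colon Y\times Y\to Y$ is non-decreasing if $a\circ c\ge b\circ d$ whenever $a\ge b$ and $c\ge d$; it is left-continuous if $\lim_n (x_n\circ y_n)=x\circ y$ whenever $x_n\nearrow x$, $y_n\nearrow y$ (strictly increasing sequences converging to $x$, $y$). For a measurable $h\colon X\to Y$, $A\in\mathcal F$ and a non-decreasing operator $\circ$, the generalized Sugeno integral is $\int_A h\circ\mu=\sup_{\alpha\in Y}\{\alpha\circ\mu(A\cap\{h\ge\alpha\})\}$, where $\{h\ge\alpha\}=\{x\in X: h(x)\ge\alpha\}$. For $C\subset X$, $h|_C$ denotes the restriction and $\{h|_C\ge a\}=C\cap\{h\ge a\}$. Functions $f|_A$ and $g|_B$ are positively dependent with respect to $\mu$ and an operator $\triangle$ if for all $a,b\in Y$: $\mu(\{f|_A\ge a\}\cap\{g|_B\ge b\})\ge\mu(\{f|_A\ge a\})\,\triangle\,\mu(\{g|_B\ge b\})$. *)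

From Stdlib Require Import Reals ClassicalEpsilon.
Open Scope R_scope.

Inductive ereal : Type := Fin (x : R) | PInf.

Definition ele (x y : ereal) : Prop :=
  match x, y with
  | Fin a, Fin b => a <= b
  | _, PInf => True
  | PInf, Fin _ => False
  end.

Definition elt (x y : ereal) : Prop := ele x y /\ x <> y.

(* Y = [0, top], where top = 1 (Y = [0,1]) or top = +oo (Y = [0,oo]). *)
Definition inY (top : ereal) (x : ereal) : Prop := ele (Fin 0) x /\ ele x top.

(* power x^t (only used for x >= 0 and t > 0); 0^t = 0, oo^t = oo for t > 0 *)
Definition epow (x : ereal) (t : R) : ereal :=
  match x with
  | Fin a => if Rle_dec a 0 then (if Rlt_dec 0 t then Fin 0 else Fin 1)
             else Fin (Rpower a t)
  | PInf => if Rlt_dec 0 t then PInf else if Req_EM_T t 0 then Fin 1 else Fin 0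
  end.

Definition is_esup (S : ereal -> Prop) (l : ereal) : Prop :=
  (forall v, S v -> ele v l) /\ (forall u, (forall v, S v -> ele v u) -> ele l u).

Definition esup (S : ereal -> Prop) : ereal :=
  epsilon (inhabits PInf) (is_esup S).

Definition ecv (u : nat -> ereal) (l : ereal) : Prop :=
  match l with
  | Fin a => forall eps, eps > 0 -> exists N, forall n, (n >= N)%nat ->
               exists b, u n = Fin b /\ Rabs (b - a) < eps
  | PInf => forall M, exists N, forall n, (n >= N)%nat -> elt (Fin M) (u n)
  end.

Definition sigma_algebra {X : Type} (F : (X -> Prop) -> Prop) : Prop :=
  F (fun _ => False) /\
  (forall A, F A -> F (fun x => ~ A x)) /\
  (forall An : nat -> X -> Prop, (forall n, F (An n)) -> F (fun x => exists n, An n x)).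

Definition monotone_measure {X : Type} (top : ereal) (F : (X -> Prop) -> Prop)
  (mu : (X -> Prop) -> ereal) : Prop :=
  (forall A, F A -> inY top (mu A)) /\
  mu (fun _ => False) = Fin 0 /\
  elt (Fin 0) (mu (fun _ => True)) /\
  (forall A B, F A -> F B -> (forall x, A x -> B x) -> ele (mu A) (mu B)).

(* measurable Y-valued function (Borel sigma-algebra on Y is generated by
   the sets [alpha, top]) *)
Definition measurable_fun {X : Type} (top : ereal) (F : (X -> Prop) -> Prop)
  (h : X -> ereal) : Prop :=
  (forall x, inY top (h x)) /\ (forall a, inY top a -> F (fun x => ele a (h x))).

Definition binop_on (top : ereal) (op : ereal -> ereal -> ereal) : Prop :=
  forall a b, inY top a -> inY top b -> inY top (op a b).

Definition nondecreasing_op (top : ereal) (op : ereal -> ereal -> ereal) : Prop :=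
  forall a b c d, inY top a -> inY top b -> inY top c -> inY top d ->
    ele b a -> ele d c -> ele (op b d) (op a c).

Definition strictly_increasing_to (top : ereal) (u : nat -> ereal) (l : ereal) : Prop :=
  (forall n, inY top (u n)) /\ (forall n, elt (u n) (u (S n))) /\ ecv u l.

Definition left_continuous_op (top : ereal) (op : ereal -> ereal -> ereal) : Prop :=
  forall (x y : ereal) (xn yn : nat -> ereal), inY top x -> inY top y ->
    strictly_increasing_to top xn x -> strictly_increasing_to top yn y ->
    ecv (fun n => op (xn n) (yn n)) (op x y).

Definition sugeno {X : Type} (top : ereal) (op : ereal -> ereal -> ereal)
  (mu : (X -> Prop) -> ereal) (A : X -> Prop) (h : X -> ereal) : ereal :=
  esup (fun v => exists a, inY top a /\ v = op a (mu (fun x => A x /\ ele a (h x)))).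

Definition pos_dependent {X : Type} (top : ereal) (mu : (X -> Prop) -> ereal)
  (tri : ereal -> ereal -> ereal) (f : X -> ereal) (A : X -> Prop)
  (g : X -> ereal) (B : X -> Prop) : Prop :=
  forall a b, inY top a -> inY top b ->
    ele (tri (mu (fun x => A x /\ ele a (f x))) (mu (fun x => B x /\ ele b (g x))))
        (mu (fun x => (A x /\ ele a (f x)) /\ (B x /\ ele b (g x)))).

(* Fix levels al, be.  The hypothesis on (box, tri) and positive dependence give
     (al o mu(A /\ {f >= al})) (o) (be o mu(B /\ {g >= be}))
       <= (al box be) o mu(A /\ B /\ {(f box g)^p >= (al box be)^p}),
   and a^t o b >= (a o b)^t bounds the right side by (int_(A/\B) (f box g)^p o mu)^(1/p).
   Approximating both Sugeno integrals strictly from below and using left-continuity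
   of (o) passes to the suprema over al and be. *)

From Stdlib Require Import Reals Lra Classical ClassicalEpsilon
  FunctionalExtensionality PropExtensionality.
Open Scope R_scope.

Lemma ele_refl x : ele x x.
Proof. destruct x; simpl; auto; lra. Qed.

Lemma ele_trans x y z : ele x y -> ele y z -> ele x z.
Proof. destruct x, y, z; simpl; intros; auto; try lra; contradiction. Qed.

Lemma ele_total x y : ele x y \/ ele y x.
Proof. destruct x, y; simpl; auto; lra. Qed.

Lemma ele_antisym x y : ele x y -> ele y x -> x = y.
Proof. destruct x, y; simpl; intros; try contradiction; auto; f_equal; lra. Qed.

Lemma elt_Fin a b : a < b -> elt (Fin a) (Fin b).
Proof. intro Hab; split; [simpl; lra | intro E; injection E; lra]. Qed.

Lemma elt_Fin_PInf a : elt (Fin a) PInf.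
Proof. split; [exact I | discriminate]. Qed.

Lemma esup_exists (S : ereal -> Prop) : (exists v, S v) -> exists l, is_esup S l.
Proof.
  intros [v0 Hv0].
  destruct (classic (exists M, forall v, S v -> ele v (Fin M))) as [[M HM] | Hunb].
  - set (E := fun x => S (Fin x)).
    assert (HE : exists x, E x).
    { destruct v0 as [x0 |]; [now exists x0 | destruct (HM _ Hv0)]. }
    destruct (completeness E (ex_intro _ M (fun x Hx => HM _ Hx)) HE) as [m [Hub Hleast]].
    exists (Fin m); split.
    + intros [x |] Hv; [exact (Hub x Hv) | destruct (HM _ Hv)].
    + intros [c |] Hu; simpl; auto.
      apply Hleast; intros x Hx; exact (Hu _ Hx).
  - exists PInf; split.
    + intros [] _; exact I.
    + intros [c |] Hu; simpl; auto.
      apply Hunb; exists c; exact Hu.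
Qed.

Lemma esup_spec (S : ereal -> Prop) : (exists v, S v) -> is_esup S (esup S).
Proof. intro HS; unfold esup; apply epsilon_spec, esup_exists, HS. Qed.

Lemma esup_ub S v : S v -> ele v (esup S).
Proof. intro Hv; exact (proj1 (esup_spec S (ex_intro _ v Hv)) v Hv). Qed.

Lemma esup_least S u : (exists v, S v) -> (forall v, S v -> ele v u) -> ele (esup S) u.
Proof. intros HS Hu; exact (proj2 (esup_spec S HS) u Hu). Qed.

Lemma esup_approx S x : (exists v, S v) -> elt x (esup S) -> exists v, S v /\ ele x v.
Proof.
  intros HS [Hle Hne]; apply NNPP; intro Hnone.
  apply Hne, ele_antisym; [exact Hle |].
  apply esup_least; [exact HS |]; intros v Hv.
  destruct (ele_total x v); [exfalso; apply Hnone; eauto | assumption].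
Qed.

Lemma ecv_le u l T : ecv u l -> (forall n, ele (u n) T) -> ele l T.
Proof.
  intros Hcv Hu; destruct l as [a |], T as [c |]; simpl; auto.
  - destruct (Rle_dec a c) as [| Hca]; [assumption | exfalso].
    destruct (Hcv (a - c)) as [N HN]; [lra |].
    destruct (HN N (le_n N)) as [b [Hb Hdist]].
    specialize (Hu N); rewrite Hb in Hu; simpl in Hu.
    apply Rabs_def2 in Hdist; lra.
  - destruct (Hcv c) as [N HN].
    destruct (HN N (le_n N)) as [Hle Hne].
    exact (Hne (ele_antisym _ _ Hle (Hu N))).
Qed.

Lemma Rpower_1_l t : Rpower 1 t = 1.
Proof. unfold Rpower; rewrite ln_1, Rmult_0_r; apply exp_0. Qed.

Lemma epow_Fin a t : 0 < t -> epow (Fin a) t = if Rle_dec a 0 then Fin 0 else Fin (Rpower a t).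
Proof. intro Ht; simpl; destruct (Rle_dec a 0); auto; destruct (Rlt_dec 0 t); auto; lra. Qed.

Lemma epow_PInf t : 0 < t -> epow PInf t = PInf.
Proof. intro Ht; simpl; destruct (Rlt_dec 0 t); auto; lra. Qed.

Lemma epow_ge0 x t : 0 < t -> ele (Fin 0) (epow x t).
Proof.
  intro Ht; destruct x as [a |].
  - rewrite epow_Fin by exact Ht; destruct (Rle_dec a 0); simpl; [lra |].
    left; apply exp_pos.
  - rewrite epow_PInf by exact Ht; exact I.
Qed.

Lemma epow_le x y t : 0 < t -> ele (Fin 0) x -> ele x y -> ele (epow x t) (epow y t).
Proof.
  intros Ht H0 Hxy; destruct x as [a |], y as [b |]; simpl in H0, Hxy; try contradiction.
  - rewrite !epow_Fin by exact Ht.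
    destruct (Rle_dec a 0), (Rle_dec b 0); simpl; try lra.
    + left; apply exp_pos.
    + apply Rle_Rpower_l; lra.
  - rewrite epow_PInf by exact Ht; destruct (epow (Fin a) t); exact I.
  - rewrite epow_PInf by exact Ht; exact I.
Qed.

Lemma epow_1 x : ele (Fin 0) x -> epow x 1 = x.
Proof.
  intro H0; destruct x as [a |]; [| apply epow_PInf; lra].
  rewrite epow_Fin by lra; simpl in H0.
  destruct (Rle_dec a 0); [f_equal; lra | rewrite Rpower_1; auto; lra].
Qed.

Lemma epow_epow x a b : 0 < a -> 0 < b -> epow (epow x a) b = epow x (a * b).
Proof.
  intros Ha Hb; assert (Hab : 0 < a * b) by (apply Rmult_lt_0_compat; auto).
  destruct x as [c |]; [| rewrite !epow_PInf; auto].
  rewrite !epow_Fin by assumption; destruct (Rle_dec c 0).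
  - rewrite epow_Fin by exact Hb; destruct (Rle_dec 0 0); auto; lra.
  - rewrite epow_Fin by exact Hb; destruct (Rle_dec (Rpower c a) 0) as [Hle |].
    + exfalso; pose proof (exp_pos (a * ln c)); unfold Rpower in Hle; lra.
    + rewrite Rpower_mult; reflexivity.
Qed.

Lemma epow_epow_inv x t : 0 < t -> ele (Fin 0) x -> epow (epow x t) (/ t) = x.
Proof.
  intros Ht H0; rewrite epow_epow by (auto; apply Rinv_0_lt_compat, Ht).
  rewrite Rinv_r by lra; apply epow_1, H0.
Qed.

Lemma epow_div x a b : 0 < a -> 0 < b -> epow x (b / a) = epow (epow x (/ a)) b.
Proof.
  intros Ha Hb; rewrite epow_epow by (auto; apply Rinv_0_lt_compat, Ha).
  f_equal; unfold Rdiv; apply Rmult_comm.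
Qed.

Section Carrier.

Variable top : ereal.
Hypothesis Htop : top = Fin 1 \/ top = PInf.

Lemma inY_0 : inY top (Fin 0).
Proof. destruct Htop as [-> | ->]; split; simpl; auto; lra. Qed.

Lemma inY_top : inY top top.
Proof. destruct Htop as [-> | ->]; split; simpl; auto; lra. Qed.

Lemma inY_epow x t : 0 < t -> inY top x -> inY top (epow x t).
Proof.
  intros Ht [H0 H1]; split; [apply epow_ge0, Ht |].
  destruct Htop as [-> | ->]; [| destruct (epow x t); exact I].
  apply ele_trans with (epow (Fin 1) t); [apply epow_le; auto |].
  rewrite epow_Fin by exact Ht; destruct (Rle_dec 1 0); [lra |].
  rewrite Rpower_1_l; simpl; lra.
Qed.

End Carrier.

Lemma cv_infty_INR : cv_infty INR.
Proof.
  intro M; destruct (INR_archimed 1 M) as [N HN]; [lra |].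
  exists N; intros n Hn; apply le_INR in Hn; lra.
Qed.

Lemma ecv_Fin v a : Un_cv v a -> ecv (fun n => Fin (v n)) (Fin a).
Proof.
  intros Hcv eps Heps; destruct (Hcv eps Heps) as [N HN].
  exists N; intros n Hn; exists (v n); split; [reflexivity | exact (HN n Hn)].
Qed.

Lemma ecv_PInf v : cv_infty v -> ecv (fun n => Fin (v n)) PInf.
Proof.
  intros Hv M; destruct (Hv M) as [N HN].
  exists N; intros n Hn; apply elt_Fin, HN, Hn.
Qed.

(* [x - x / (n + 2)] increases strictly to [x]. *)
Lemma Rseq_strictly_increasing_to x : 0 < x -> exists v : nat -> R,
  (forall n, 0 <= v n < x) /\ (forall n, v n < v (S n)) /\ Un_cv v x.
Proof.
  intro Hx; set (d n := INR n + 2).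
  assert (Hd : forall n, 1 < d n) by (intro n; pose proof (pos_INR n); unfold d; lra).
  exists (fun n => x - x * / d n); split; [| split].
  - intro n; assert (0 < / d n < 1).
    { split; [apply Rinv_0_lt_compat; specialize (Hd n); lra |].
      rewrite <- Rinv_1; apply Rinv_lt_contravar; [specialize (Hd n); lra | apply Hd]. }
    split; nra.
  - intro n; assert (/ d (S n) < / d n); [| nra].
    apply Rinv_lt_contravar; [pose proof (Hd n); pose proof (Hd (S n)); nra |].
    unfold d; rewrite S_INR; lra.
  - assert (Hconst : forall c, Un_cv (fun _ => c) c).
    { intros c eps Heps; exists O; intros n _; unfold Rdist.
      rewrite Rminus_diag, Rabs_R0; exact Heps. }
    assert (Hlim : Un_cv (fun n => x - x * / d n) (x - x * 0)).
    { apply CV_minus, CV_mult; [apply Hconst .. |].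
      apply cv_infty_cv_0; intro M; destruct (cv_infty_INR M) as [N HN].
      exists N; intros n Hn; specialize (HN n Hn); unfold d; lra. }
    rewrite Rmult_0_r, Rminus_0_r in Hlim; exact Hlim.
Qed.

Lemma strictly_increasing_to_exists top x : (top = Fin 1 \/ top = PInf) -> inY top x -> elt (Fin 0) x ->
  exists u, strictly_increasing_to top u x /\ forall n, elt (u n) x.
Proof.
  intros Htop [_ Hxtop] [Hx0 Hx0']; destruct x as [x |].
  - assert (Hx : 0 < x) by (destruct Hx0 as [| E]; [assumption | subst; congruence]).
    destruct (Rseq_strictly_increasing_to x Hx) as [v [Hv [Hinc Hcv]]].
    exists (fun n => Fin (v n)); split; [split; [| split] |].
    + intro n; split; [apply (Hv n) | apply ele_trans with (Fin x); [simpl; apply Rlt_le, Hv | exact Hxtop]].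
    + intro n; apply elt_Fin, Hinc.
    + apply ecv_Fin, Hcv.
    + intro n; apply elt_Fin, Hv.
  - assert (top = PInf) as -> by (destruct Htop as [-> | ->]; [destruct Hxtop | reflexivity]).
    exists (fun n => Fin (INR n)); split; [split; [| split] |].
    + intro n; split; [apply pos_INR | exact I].
    + intro n; apply elt_Fin; rewrite S_INR; lra.
    + apply ecv_PInf, cv_infty_INR.
    + intro n; apply elt_Fin_PInf.
Qed.

Lemma left_continuous_op_le top op x y w : (top = Fin 1 \/ top = PInf) ->
  left_continuous_op top op -> inY top x -> inY top y -> elt (Fin 0) x -> elt (Fin 0) y ->
  (forall u v, inY top u -> inY top v -> elt u x -> elt v y -> ele (op u v) w) ->
  ele (op x y) w.
Proof.
  intros Htop Hlc Hx Hy Hx0 Hy0 Hle.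
  destruct (strictly_increasing_to_exists top x Htop Hx Hx0) as [u [Hu Hux]].
  destruct (strictly_increasing_to_exists top y Htop Hy Hy0) as [v [Hv Hvy]].
  apply ecv_le with (fun n => op (u n) (v n)); [exact (Hlc x y u v Hx Hy Hu Hv) |].
  intro n; apply Hle; [apply (proj1 Hu) | apply (proj1 Hv) | apply Hux | apply Hvy].
Qed.

Lemma sigma_algebra_inter {X} (F : (X -> Prop) -> Prop) A B :
  sigma_algebra F -> F A -> F B -> F (fun x => A x /\ B x).
Proof.
  intros [_ [Hcompl Hunion]] HA HB.
  set (C n x := match n with O => ~ A x | S _ => ~ B x end).
  replace (fun x => A x /\ B x) with (fun x => ~ exists n, C n x).
  - apply Hcompl, Hunion; intros [| n]; apply Hcompl; assumption.
  - apply functional_extensionality; intro x; apply propositional_extensionality; split.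
    + intro Hn; split; apply NNPP; intro H; apply Hn; [exists O | exists 1%nat]; exact H.
    + intros [Ha Hb] [[| n] Hn]; auto.
Qed.

Section Sugeno.

Variables (X : Type) (F : (X -> Prop) -> Prop) (top : ereal)
  (mu : (X -> Prop) -> ereal) (circ : ereal -> ereal -> ereal).
Hypotheses (Htop : top = Fin 1 \/ top = PInf) (HF : sigma_algebra F)
  (Hmu : monotone_measure top F mu) (Hcirc : binop_on top circ)
  (Hcirc_nd : nondecreasing_op top circ).

Lemma mu_inY D : F D -> inY top (mu D).
Proof. apply (proj1 Hmu). Qed.

Lemma mu_le D E : F D -> F E -> (forall x, D x -> E x) -> ele (mu D) (mu E).
Proof. apply (proj2 (proj2 (proj2 Hmu))). Qed.

Lemma measurable_level D h a : F D -> measurable_fun top F h -> inY top a ->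
  F (fun x => D x /\ ele a (h x)).
Proof. intros HD Hh Ha; apply sigma_algebra_inter, (proj2 Hh); auto. Qed.

Lemma sugeno_ub D h a : inY top a ->
  ele (circ a (mu (fun x => D x /\ ele a (h x)))) (sugeno top circ mu D h).
Proof. intro Ha; apply esup_ub; exists a; auto. Qed.

Let sugeno_values_nonempty D h :
  exists v, exists a, inY top a /\ v = circ a (mu (fun x => D x /\ ele a (h x))).
Proof. eexists; exists (Fin 0); split; [apply inY_0, Htop | reflexivity]. Qed.

Lemma sugeno_least D h u :
  (forall a, inY top a -> ele (circ a (mu (fun x => D x /\ ele a (h x)))) u) ->
  ele (sugeno top circ mu D h) u.
Proof.
  intro Hu; apply esup_least; [apply sugeno_values_nonempty |].
  intros v [a [Ha ->]]; auto.
Qed.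

Lemma sugeno_approx D h u : elt u (sugeno top circ mu D h) ->
  exists a, inY top a /\ ele u (circ a (mu (fun x => D x /\ ele a (h x)))).
Proof.
  intro Hu; apply esup_approx in Hu; [| apply sugeno_values_nonempty].
  destruct Hu as [v [[a [Ha ->]] Hv]]; eauto.
Qed.

Lemma sugeno_inY D h : F D -> measurable_fun top F h -> inY top (sugeno top circ mu D h).
Proof.
  intros HD Hh.
  assert (Hv : forall a, inY top a -> inY top (circ a (mu (fun x => D x /\ ele a (h x))))).
  { intros a Ha; apply Hcirc, mu_inY, measurable_level; auto. }
  split.
  - apply ele_trans with (circ (Fin 0) (mu (fun x => D x /\ ele (Fin 0) (h x)))).
    + apply Hv, inY_0, Htop.
    + apply sugeno_ub, inY_0, Htop.
  - apply sugeno_least; intros a Ha; apply Hv, Ha.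
Qed.

Lemma sugeno_le_top_circ D h : F D -> measurable_fun top F h ->
  ele (sugeno top circ mu D h) (circ top (mu (fun x => D x /\ ele (Fin 0) (h x)))).
Proof.
  intros HD Hh; apply sugeno_least; intros a Ha.
  pose proof (inY_0 top Htop); pose proof (inY_top top Htop).
  apply Hcirc_nd; auto using mu_inY, measurable_level; [apply Ha |].
  apply mu_le; auto using measurable_level.
  intros x [Hx _]; split; [exact Hx | apply Hh].
Qed.

End Sugeno.

Section SugenoHolder.

Variables (X : Type) (F : (X -> Prop) -> Prop) (top : ereal)
  (mu : (X -> Prop) -> ereal) (circ box ocirc tri : ereal -> ereal -> ereal).
Hypotheses (Htop : top = Fin 1 \/ top = PInf) (HF : sigma_algebra F)
  (Hmu : monotone_measure top F mu)
  (Hcirc : binop_on top circ) (Hbox : binop_on top box)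
  (Htri : binop_on top tri)
  (Hcirc_nd : nondecreasing_op top circ) (Hbox_nd : nondecreasing_op top box)
  (Hocirc_nd : nondecreasing_op top ocirc) (Hocirc_lc : left_continuous_op top ocirc)
  (Hcirc_pow : forall a b t, inY top a -> inY top b -> 1 <= t ->
     ele (epow (circ a b) t) (circ (epow a t) b))
  (Hocirc_box : forall a b c d, inY top a -> inY top b -> inY top c -> inY top d ->
     ele (ocirc (circ a c) (circ b d)) (circ (box a b) (tri c d))).

Let F_inter A B : F A -> F B -> F (fun x => A x /\ B x) := sigma_algebra_inter F A B HF.
Let circ_inY a b : inY top a -> inY top b -> inY top (circ a b) := Hcirc a b.
Let box_inY a b : inY top a -> inY top b -> inY top (box a b) := Hbox a b.
Let tri_inY a b : inY top a -> inY top b -> inY top (tri a b) := Htri a b.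
Let F_level D h a : F D -> measurable_fun top F h -> inY top a ->
  F (fun x => D x /\ ele a (h x)) := measurable_level X F top HF D h a.
Let mu_inY' D : F D -> inY top (mu D) := mu_inY X F top mu Hmu D.
Let mu_le' := mu_le X F top mu Hmu.
Let sugeno_inY' D h : F D -> measurable_fun top F h -> inY top (sugeno top circ mu D h) :=
  sugeno_inY X F top mu circ Htop HF Hmu Hcirc D h.
Local Hint Resolve inY_0 inY_top mu_inY' sugeno_inY' F_inter F_level
  circ_inY box_inY tri_inY : core.

Lemma circ_level_pow_le_sugeno_root D k p c : F D -> measurable_fun top F k -> 1 <= p ->
  inY top c ->
  ele (circ c (mu (fun x => D x /\ ele (epow c p) (k x))))
      (epow (sugeno top circ mu D k) (/ p)).
Proof.
  intros HD Hk Hp Hc.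
  assert (Hp0 : 0 < p) by lra.
  set (m := mu (fun x => D x /\ ele (epow c p) (k x))).
  assert (Hm : inY top m) by (apply mu_inY', F_level; auto using inY_epow).
  assert (Hcm : inY top (circ c m)) by auto.
  rewrite <- (epow_epow_inv (circ c m) p Hp0 (proj1 Hcm)).
  apply epow_le; [apply Rinv_0_lt_compat, Hp0 | apply epow_ge0, Hp0 |].
  apply ele_trans with (circ (epow c p) m); [auto |].
  apply sugeno_ub; auto using inY_epow.
Qed.

Section Levels.

Variables (A B : X -> Prop) (f g : X -> ereal).
Hypotheses (HA : F A) (HB : F B)
  (Hf : measurable_fun top F f) (Hg : measurable_fun top F g)
  (Hdep : pos_dependent top mu tri f A g B).

Lemma ocirc_circ_levels_le al be a b : inY top al -> inY top be -> inY top a -> inY top b ->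
  ele (ocirc (circ a (mu (fun x => A x /\ ele al (f x))))
             (circ b (mu (fun x => B x /\ ele be (g x)))))
      (circ (box a b) (mu (fun x => (A x /\ ele al (f x)) /\ (B x /\ ele be (g x))))).
Proof.
  intros Hal Hbe Ha Hb.
  eapply ele_trans; [apply Hocirc_box; auto |].
  apply Hcirc_nd; auto using ele_refl.
Qed.

Lemma ocirc_top_levels_le al be : inY top al -> inY top be ->
  ele (ocirc (circ top (mu (fun x => A x /\ ele al (f x))))
             (circ top (mu (fun x => B x /\ ele be (g x)))))
      (circ top (mu (fun x => (A x /\ ele al (f x)) /\ (B x /\ ele be (g x))))).
Proof.
  intros Hal Hbe.
  eapply ele_trans; [apply ocirc_circ_levels_le; auto |].
  apply Hcirc_nd; auto using ele_refl; apply Hbox; auto.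
Qed.

(* Left-continuity says nothing at a vanishing integral (no strictly increasing
   sequence in Y tends to 0); there the left side is bounded by
   [top o mu (A /\ {f >= top})], itself below the vanishing integral. *)
Lemma ocirc_sugeno_le_0_l : sugeno top circ mu A f = Fin 0 ->
  ele (ocirc (sugeno top circ mu A f) (sugeno top circ mu B g)) (Fin 0).
Proof.
  intro Hzero.
  assert (HtopA : ele (circ top (mu (fun x => A x /\ ele top (f x)))) (Fin 0)).
  { rewrite <- Hzero; apply sugeno_ub; auto. }
  apply ele_trans with
    (ocirc (circ top (mu (fun x => A x /\ ele top (f x))))
           (circ top (mu (fun x => B x /\ ele (Fin 0) (g x))))).
  { apply Hocirc_nd; auto.
    - rewrite Hzero; apply circ_inY; auto.
    - apply sugeno_le_top_circ with F; auto. }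
  eapply ele_trans; [apply ocirc_top_levels_le; auto |].
  eapply ele_trans; [| exact HtopA].
  apply Hcirc_nd; auto using ele_refl.
  apply mu_le'; auto; tauto.
Qed.

Lemma ocirc_sugeno_le_0_r : sugeno top circ mu B g = Fin 0 ->
  ele (ocirc (sugeno top circ mu A f) (sugeno top circ mu B g)) (Fin 0).
Proof.
  intro Hzero.
  assert (HtopB : ele (circ top (mu (fun x => B x /\ ele top (g x)))) (Fin 0)).
  { rewrite <- Hzero; apply sugeno_ub; auto. }
  apply ele_trans with
    (ocirc (circ top (mu (fun x => A x /\ ele (Fin 0) (f x))))
           (circ top (mu (fun x => B x /\ ele top (g x))))).
  { apply Hocirc_nd; auto.
    - apply sugeno_le_top_circ with F; auto.
    - rewrite Hzero; apply circ_inY; auto. }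
  eapply ele_trans; [apply ocirc_top_levels_le; auto |].
  eapply ele_trans; [| exact HtopB].
  apply Hcirc_nd; auto using ele_refl.
  apply mu_le'; auto; tauto.
Qed.

Variable p : R.
Hypotheses (Hp : 1 <= p) (Hfg : measurable_fun top F (fun x => epow (box (f x) (g x)) p)).

Lemma ocirc_circ_levels_le_sugeno_root al be : inY top al -> inY top be ->
  ele (ocirc (circ al (mu (fun x => A x /\ ele al (f x))))
             (circ be (mu (fun x => B x /\ ele be (g x)))))
      (epow (sugeno top circ mu (fun x => A x /\ B x) (fun x => epow (box (f x) (g x)) p)) (/ p)).
Proof.
  intros Hal Hbe.
  assert (Hlevel : inY top (epow (box al be) p)) by (apply inY_epow; auto; lra).
  eapply ele_trans; [apply ocirc_circ_levels_le; auto |].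
  apply ele_trans with (circ (box al be) (mu (fun x =>
    (A x /\ B x) /\ ele (epow (box al be) p) (epow (box (f x) (g x)) p)))).
  2: { apply circ_level_pow_le_sugeno_root; auto. }
  apply Hcirc_nd; auto using ele_refl.
  apply mu_le'; auto.
  intros x [[HAx Hfx] [HBx Hgx]]; split; [tauto |].
  apply epow_le; [lra | apply box_inY; auto |].
  apply Hbox_nd; auto; [apply Hf | apply Hg].
Qed.

Lemma ocirc_sugeno_le_sugeno_root :
  ele (ocirc (sugeno top circ mu A f) (sugeno top circ mu B g))
      (epow (sugeno top circ mu (fun x => A x /\ B x) (fun x => epow (box (f x) (g x)) p)) (/ p)).
Proof.
  assert (Hroot0 : ele (Fin 0)
    (epow (sugeno top circ mu (fun x => A x /\ B x) (fun x => epow (box (f x) (g x)) p)) (/ p)))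
    by (apply epow_ge0, Rinv_0_lt_compat; lra).
  destruct (classic (sugeno top circ mu A f = Fin 0)) as [HA0 | HA0].
  { eapply ele_trans; [apply ocirc_sugeno_le_0_l |]; auto. }
  destruct (classic (sugeno top circ mu B g = Fin 0)) as [HB0 | HB0].
  { eapply ele_trans; [apply ocirc_sugeno_le_0_r |]; auto. }
  apply left_continuous_op_le with top; auto.
  - split; [apply sugeno_inY'; auto | congruence].
  - split; [apply sugeno_inY'; auto | congruence].
  - intros u v Hu Hv Hux Hvy.
    destruct (sugeno_approx X top mu circ Htop A f u Hux) as [al [Hal Hual]].
    destruct (sugeno_approx X top mu circ Htop B g v Hvy) as [be [Hbe Hvbe]].
    eapply ele_trans; [| apply (ocirc_circ_levels_le_sugeno_root al be); auto].
    apply Hocirc_nd; auto.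
Qed.

End Levels.

End SugenoHolder.

Theorem mainTheorem1 (X : Type) (F : (X -> Prop) -> Prop) (top : ereal)
  (Htop : top = Fin 1 \/ top = PInf)
  (HF : sigma_algebra F)
  (mu : (X -> Prop) -> ereal) (Hmu : monotone_measure top F mu)
  (circ star box ocirc tri : ereal -> ereal -> ereal)
  (Hcirc : binop_on top circ) (Hstar : binop_on top star) (Hbox : binop_on top box)
  (Hocirc : binop_on top ocirc) (Htri : binop_on top tri)
  (Hcirc_nd : nondecreasing_op top circ) (Hstar_nd : nondecreasing_op top star)
  (Hbox_nd : nondecreasing_op top box)
  (Hocirc_nd : nondecreasing_op top ocirc) (Hocirc_lc : left_continuous_op top ocirc)
  (H1 : forall a b t, inY top a -> inY top b -> 1 <= t ->
          ele (epow (circ a b) t) (circ (epow a t) b))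
  (H2 : forall a b c d, inY top a -> inY top b -> inY top c -> inY top d ->
          ele (ocirc (circ a c) (circ b d)) (circ (box a b) (tri c d)))
  (p q r s : R) (Hp : 1 <= p) (Hq : 1 <= q) (Hr : 0 < r) (Hs : 0 < s)
  (A B : X -> Prop) (HA : F A) (HB : F B)
  (f g h : X -> ereal)
  (Hf : measurable_fun top F f) (Hg : measurable_fun top F g) (Hh : measurable_fun top F h)
  (Hfg : measurable_fun top F (fun x => epow (box (f x) (g x)) p))
  (Hfh : measurable_fun top F (fun x => epow (box (f x) (h x)) q))
  (Hdep1 : pos_dependent top mu tri f A g B)
  (Hdep2 : pos_dependent top mu tri f A h B) :
  ele (star (epow (ocirc (sugeno top circ mu A f) (sugeno top circ mu B g)) r)
            (epow (ocirc (sugeno top circ mu A f) (sugeno top circ mu B h)) s))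
      (star (epow (sugeno top circ mu (fun x => A x /\ B x)
                     (fun x => epow (box (f x) (g x)) p)) (r / p))
            (epow (sugeno top circ mu (fun x => A x /\ B x)
                     (fun x => epow (box (f x) (h x)) q)) (s / q))).
Proof.
  assert (Hp0 : 0 < p) by lra; assert (Hq0 : 0 < q) by lra.
  assert (HAB : F (fun x => A x /\ B x)) by (apply sigma_algebra_inter; auto).
  assert (HIf : inY top (sugeno top circ mu A f)) by (apply sugeno_inY with F; auto).
  assert (HIg : inY top (sugeno top circ mu B g)) by (apply sugeno_inY with F; auto).
  assert (HIh : inY top (sugeno top circ mu B h)) by (apply sugeno_inY with F; auto).
  assert (HIfg : inY top (sugeno top circ mu (fun x => A x /\ B x)
                            (fun x => epow (box (f x) (g x)) p)))
    by (apply sugeno_inY with F; auto).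
  assert (HIfh : inY top (sugeno top circ mu (fun x => A x /\ B x)
                            (fun x => epow (box (f x) (h x)) q)))
    by (apply sugeno_inY with F; auto).
  pose proof (Hocirc _ _ HIf HIg) as HOg; pose proof (Hocirc _ _ HIf HIh) as HOh.
  apply Hstar_nd; try (apply inY_epow; auto; apply Rdiv_lt_0_compat; lra).
  - rewrite epow_div by assumption; apply epow_le; [assumption | apply HOg |].
    apply ocirc_sugeno_le_sugeno_root with F tri; assumption.
  - rewrite epow_div by assumption; apply epow_le; [assumption | apply HOh |].
    apply ocirc_sugeno_le_sugeno_root with F tri; assumption.
Qed.
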